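(* Let $F$ be an algebraically closed field and $R$ an $F$-algebra. Let $\sigma$ be an $F$-algebra automorphism of $R$ and $\delta$ a $\sigma$-derivation of $R$, and set $T=R[x;\sigma,\delta]$. Let $\Xi(T)$ (resp. $\Xi(R)$) be the set of ideals $M$ of $T$ (resp. of $R$) with $T/M\cong F$ (resp. $R/M\cong F$), and let $\Psi:\Xi(T)\to\Xi(R)$, $M\mapsto M\cap R$. Consider for $\mathfrak m\in\Xi(R)$ the conditions (a) $\delta([R,R])\subseteq\mathfrak m$; (b) $\sigma(\mathfrak m)=\mathfrak m$ and $\delta(\mathfrak m)\subseteq\mathfrak m$; (c) $\sigma(\mathfrak m)\neq\mathfrak m$. (i) If $M\in\Xi(T)$ and $\mathfrak m=\Psi(M)$, then (a) holds for $\mathfrak m$, and either (b) or (c) holds for $\mathfrak m$. (ii) If $\mathfrak m\in\Xi(R)$ satisfies (b) (and hence (a)), then $\mathfrak mT$ is an ideal of $T$ with $T/\mathfrak mT\cong F[x]$, so that $\Psi^{-1}(\mathfrak m)=\{\langle\mathfrak mT,x-\lambda\rangle:\lambda\in F\}\cong\mathbb A^1_F$. (iii) If $\mathfrak m\in\Xi(R)$ satisfies (a) and (c), then there is a unique $M\in\Xi(T)$ with $\Psi(M)=\mathfrak m$.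
   Context: $[R,R]$ denotes the set of commutators $ab-ba$, $a,b\in R$. A $\sigma$-derivation $\delta$ is an $F$-linear map with $\delta(ab)=\delta(a)b+\sigma(a)\delta(b)$, and $R[x;\sigma,\delta]$ is the algebra generated by $R$ and $x$ subject to $xr-\sigma(r)x=\delta(r)$ for $r\in R$. *)

From HB Require Import structures.
From mathcomp Require Import all_boot all_order all_algebra.
Set Implicit Arguments. Unset Strict Implicit. Unset Printing Implicit Defensive.
Import GRing.Theory.
Local Open Scope ring_scope.

Definition alg_hom (F : fieldType) (A B : lalgType F) (f : A -> B) : Prop :=
  (forall a b, f (a + b) = f a + f b) /\
  (forall (k : F) a, f (k *: a) = k *: f a) /\
  (forall a b, f (a * b) = f a * f b) /\
  f 1 = 1.

Definition is_ideal (A : pzRingType) (I : A -> Prop) : Prop :=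
  I 0 /\ (forall a b, I a -> I b -> I (a + b)) /\
  (forall a b, I b -> I (a * b)) /\ (forall a b, I a -> I (a * b)).

Definition set_eq (A : Type) (P Q : A -> Prop) : Prop := forall a, P a <-> Q a.

(* Xi(A): ideals M of the F-algebra A with A/M isomorphic to F as F-algebras,
   i.e. (first isomorphism theorem) M is the kernel of a (necessarily
   surjective) F-algebra homomorphism A -> F. *)
Definition Xi (F : fieldType) (A : lalgType F) (M : A -> Prop) : Prop :=
  exists phi : A -> F^o, alg_hom phi /\ set_eq M (fun a => phi a = 0).

Definition sigma_derivation (F : fieldType) (R : lalgType F) (s d : R -> R) :=
  (forall (k : F) a b, d (k *: a + b) = k *: d a + d b) /\
  (forall a b, d (a * b) = d a * b + s a * d b).

Definition alg_aut (F : fieldType) (R : lalgType F) (s : R -> R) :=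
  alg_hom s /\ bijective s.

Definition ore_sum (F : fieldType) (R T : lalgType F) (iota : R -> T) (x : T)
  (c : seq R) : T := \sum_(i < size c) iota c`_i * x ^+ i.

(* (T, iota, x) is the Ore extension R[x; s, d]: iota : R -> T is an F-algebra
   map, x iota(r) - iota(s r) x = iota(d r), and the powers of x form a basis
   of T as a left R-module (every element is uniquely sum_i iota(r_i) x^i). *)
Definition is_ore_ext (F : fieldType) (R T : lalgType F) (s d : R -> R)
  (iota : R -> T) (x : T) : Prop :=
  alg_hom iota /\
  (forall r, x * iota r - iota (s r) * x = iota (d r)) /\
  (forall t, exists c : seq R, t = ore_sum iota x c) /\
  (forall c : seq R, ore_sum iota x c = 0 -> forall i, c`_i = 0).

Definition Psi (F : fieldType) (R T : lalgType F) (iota : R -> T) (M : T -> Prop)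
  : R -> Prop := fun r => M (iota r).

Definition cond_a (F : fieldType) (R : lalgType F) (d : R -> R) (m : R -> Prop) :=
  forall a b, m (d (a * b - b * a)).

Definition img (A : Type) (f : A -> A) (m : A -> Prop) : A -> Prop :=
  fun y => exists r, m r /\ y = f r.

Definition cond_b (F : fieldType) (R : lalgType F) (s d : R -> R) (m : R -> Prop) :=
  set_eq (img s m) m /\ (forall r, m r -> m (d r)).

Definition cond_c (F : fieldType) (R : lalgType F) (s : R -> R) (m : R -> Prop) :=
  ~ set_eq (img s m) m.

Definition ext_right (F : fieldType) (R T : lalgType F) (iota : R -> T)
  (m : R -> Prop) : T -> Prop :=
  fun t => exists n (a : 'I_n -> R) (b : 'I_n -> T),
    (forall i, m (a i)) /\ t = \sum_(i < n) iota (a i) * b i.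

Definition ideal_gen (A : pzRingType) (S : A -> Prop) : A -> Prop :=
  fun t => forall I, is_ideal I -> (forall s, S s -> I s) -> I t.

Definition fiber_ideal (F : fieldType) (R T : lalgType F) (iota : R -> T)
  (x : T) (m : R -> Prop) (lam : F) : T -> Prop :=
  ideal_gen (fun t => ext_right iota m t \/ t = x - lam%:A).

From HB Require Import structures.
From mathcomp Require Import all_boot all_order all_algebra.
From mathcomp Require Import ring.
From Stdlib Require Import Classical ClassicalEpsilon.
Set Implicit Arguments. Unset Strict Implicit. Unset Printing Implicit Defensive.
Import GRing.Theory.
Local Open Scope ring_scope.

(* Every point of Xi(T) is the kernel of a character Ps : T -> F, and Ps is
   determined by chi = Ps o iota together with mu = Ps x.  Applying Ps to
   x r - s(r) x = d(r) gives chi(d r) = mu (chi r - chi(s r)), so chi o d is an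
   inner (chi o s, chi)-derivation; it kills commutators, which is (a).  If
   s(m) = m then chi o s = chi and this forces chi o d = 0, i.e. (b).
   Conversely, the universal property of R[x; s, d] extends chi to a character
   sending x to any mu satisfying the relation above.  Under (b) every mu
   works, so chi extends to T -> F[x] with x |-> X, whose kernel is mT; the
   characters over m are its evaluations at the points of F.  Under (a) and
   (c), pick b0 with chi b0 <> chi(s b0): (a) says exactly that
   chi(d b) / (chi b - chi(s b)) is independent of b, so mu is unique. *)

Section AlgHom.
Variables (F : fieldType) (A B : lalgType F) (f : A -> B).
Hypothesis Hf : alg_hom f.

Lemma alg_homD a b : f (a + b) = f a + f b. Proof. by case: Hf. Qed.
Lemma alg_homZ k a : f (k *: a) = k *: f a. Proof. by case: Hf => _ []. Qed.
Lemma alg_homM a b : f (a * b) = f a * f b. Proof. by case: Hf => _ [] _ []. Qed.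
Lemma alg_hom1 : f 1 = 1. Proof. by case: Hf => _ [] _ []. Qed.

Lemma alg_hom0 : f 0 = 0.
Proof. by apply: (addrI (f 0)); rewrite -alg_homD !addr0. Qed.

Lemma alg_homN a : f (- a) = - f a.
Proof. by apply: (addrI (f a)); rewrite -alg_homD !subrr alg_hom0. Qed.

Lemma alg_homB a b : f (a - b) = f a - f b.
Proof. by rewrite alg_homD alg_homN. Qed.

Lemma alg_homX a n : f (a ^+ n) = f a ^+ n.
Proof. by elim: n => [|n IH]; rewrite ?expr0 ?alg_hom1 // !exprS alg_homM IH. Qed.

Lemma alg_hom_sum n (g : 'I_n -> A) : f (\sum_(i < n) g i) = \sum_(i < n) f (g i).
Proof.
elim: n g => [|n IH] g; first by rewrite !big_ord0 alg_hom0.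
by rewrite !big_ord_recr /= alg_homD IH.
Qed.

Lemma alg_hom_scale1 k : f (k *: 1) = k *: 1.
Proof. by rewrite alg_homZ alg_hom1. Qed.

End AlgHom.

Lemma alg_hom_comp (F : fieldType) (A B C : lalgType F) (f : A -> B) (g : B -> C) :
  alg_hom f -> alg_hom g -> alg_hom (fun a => g (f a)).
Proof.
move=> Hf Hg; split; [|split; [|split]] => *.
- by rewrite (alg_homD Hf) (alg_homD Hg).
- by rewrite (alg_homZ Hf) (alg_homZ Hg).
- by rewrite (alg_homM Hf) (alg_homM Hg).
- by rewrite (alg_hom1 Hf) (alg_hom1 Hg).
Qed.

Lemma alg_hom_ore_sum (F : fieldType) (A B C : lalgType F) (f : B -> C)
    (g : A -> B) (y : B) c :
  alg_hom f -> f (ore_sum g y c) = ore_sum (fun a => f (g a)) (f y) c.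
Proof.
move=> Hf; rewrite /ore_sum (alg_hom_sum Hf); apply: eq_bigr => i _.
by rewrite (alg_homM Hf) (alg_homX Hf).
Qed.

Lemma polyC_alg_hom (F : fieldType) : alg_hom (fun k : F^o => k%:P : {poly F}).
Proof.
split; [by move=> a b; rewrite polyCD|split; [|split]] => //.
- by move=> k a; rewrite -scale_polyC.
- by move=> a b; rewrite polyCM.
Qed.

Lemma horner_alg_hom (F : fieldType) (lam : F) :
  alg_hom (fun p : {poly F} => p.[lam] : F^o).
Proof.
split; [by move=> a b; rewrite hornerD|split; [|split]].
- by move=> k a; rewrite hornerZ.
- by move=> a b; rewrite hornerM.
- by rewrite -[1]polyC1 hornerC.
Qed.

Section OreSum.
Variables (F : fieldType) (A B : lalgType F) (g : A -> B) (y : B).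
Hypothesis Hg : alg_hom g.

Lemma ore_sum_widen c N :
  (size c <= N)%N -> ore_sum g y c = \sum_(i < N) g c`_i * y ^+ i.
Proof.
move=> hN; rewrite /ore_sum (big_ord_widen N (fun i => g c`_i * y ^+ i) hN).
rewrite big_mkcond; apply: eq_bigr => i _; case: ifP => // /negbT.
by rewrite -leqNgt => hi; rewrite nth_default // (alg_hom0 Hg) mul0r.
Qed.

Lemma ore_sum_seq1 r : ore_sum g y [:: r] = g r.
Proof. by rewrite /ore_sum big_ord1 /= expr0 mulr1. Qed.

Lemma ore_sum_X : ore_sum g y [:: 0; 1] = y.
Proof.
rewrite /ore_sum /= big_ord_recr big_ord1 /= (alg_hom0 Hg) (alg_hom1 Hg).
by rewrite mul0r add0r mul1r expr1.
Qed.

Lemma ore_sumD a b :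
  ore_sum g y a + ore_sum g y b =
  ore_sum g y (mkseq (fun i => a`_i + b`_i) (maxn (size a) (size b))).
Proof.
rewrite (ore_sum_widen (leq_maxl (size a) (size b))).
rewrite (ore_sum_widen (leq_maxr (size a) (size b))).
rewrite /ore_sum size_mkseq -big_split; apply: eq_bigr => i _ /=.
by rewrite nth_mkseq // (alg_homD Hg) mulrDl.
Qed.

Lemma ore_sumB a b :
  ore_sum g y a - ore_sum g y b =
  ore_sum g y (mkseq (fun i => a`_i - b`_i) (maxn (size a) (size b))).
Proof.
rewrite (ore_sum_widen (leq_maxl (size a) (size b))).
rewrite (ore_sum_widen (leq_maxr (size a) (size b))).
rewrite /ore_sum size_mkseq -sumrB; apply: eq_bigr => i _ /=.
by rewrite nth_mkseq // (alg_homB Hg) mulrBl.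
Qed.

Lemma ore_sum_mull r c : g r * ore_sum g y c = ore_sum g y (map ( *%R r) c).
Proof.
rewrite /ore_sum size_map mulr_sumr; apply: eq_bigr => i _.
by rewrite (nth_map 0) // (alg_homM Hg) mulrA.
Qed.

Lemma ore_sum_mulX (s d : A -> A) c :
  (forall r, y * g r = g (s r) * y + g (d r)) ->
  y * ore_sum g y c = ore_sum g y (0 :: map s c) + ore_sum g y (map d c).
Proof.
move=> Hy; rewrite /ore_sum /= !size_map big_ord_recl /= (alg_hom0 Hg) mul0r add0r.
rewrite mulr_sumr -big_split; apply: eq_bigr => i _ /=.
by rewrite /bump /= ?add0n ?add1n !(nth_map 0) // mulrA Hy mulrDl exprS mulrA.
Qed.

End OreSum.

Section Characters.
Variables (F : fieldType) (R : lalgType F).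

Lemma regular_scale1 (k : F) : k *: (1 : F^o) = k.
Proof. by rewrite /GRing.scale /= mulr1. Qed.

Lemma char_sub_scalar (chi : R -> F^o) r : alg_hom chi -> chi (r - chi r *: 1) = 0.
Proof. by move=> H; rewrite (alg_homB H) (alg_hom_scale1 H) regular_scale1 subrr. Qed.

Lemma char_eq_ker (c1 c2 : R -> F^o) :
  alg_hom c1 -> alg_hom c2 -> (forall r, c1 r = 0 <-> c2 r = 0) ->
  forall r, c1 r = c2 r.
Proof.
move=> H1 H2 E r; have /E := char_sub_scalar r H1.
by rewrite (alg_homB H2) (alg_hom_scale1 H2) regular_scale1 => /eqP; rewrite subr_eq0 => /eqP.
Qed.

Lemma char_commutator (chi : R -> F^o) a b : alg_hom chi -> chi (a * b - b * a) = 0.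
Proof. by move=> H; rewrite (alg_homB H) !(alg_homM H) mulrC subrr. Qed.

Lemma img_ker_aut (s : R -> R) (chi : R -> F^o) (m : R -> Prop) :
  alg_aut s -> alg_hom chi -> set_eq m (fun r => chi r = 0) ->
  set_eq (img s m) m <-> forall r, chi (s r) = chi r.
Proof.
move=> [Hs [g Hsg Hgs]] Hchi Hm; split => [E | E r].
  apply: char_eq_ker (alg_hom_comp Hs Hchi) Hchi _ => r; split.
    move=> /Hm /E [r' [/Hm Hr' Esr]].
    by rewrite -(Hsg r) Esr Hsg.
  by move=> /Hm Hr; apply/Hm/E; exists r.
split=> [[r' [/Hm Hr' ->]] | /Hm Hr]; first by apply/Hm; rewrite E.
by exists (g r); split; [apply/Hm; rewrite -E Hgs | rewrite Hgs].
Qed.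

Lemma ker_is_ideal (A : comAlgType F) (f : R -> A) :
  alg_hom f -> is_ideal (fun t => f t = 0).
Proof.
move=> H; split; first exact: alg_hom0.
split; first by move=> a b ha hb; rewrite (alg_homD H) ha hb addr0.
split; first by move=> a b hb; rewrite (alg_homM H) hb mulr0.
by move=> a b ha; rewrite (alg_homM H) ha mul0r.
Qed.

End Characters.

Lemma is_ideal_eq (A : pzRingType) (P Q : A -> Prop) :
  set_eq P Q -> is_ideal Q -> is_ideal P.
Proof.
move=> E [h0 [hD [hl hr]]]; split; first by apply/E.
split; first by move=> a b /E ha /E hb; apply/E; apply: hD.
split; first by move=> a b /E hb; apply/E; apply: hl.
by move=> a b /E ha; apply/E; apply: hr.
Qed.

Section SigmaDerivation.
Variables (F : fieldType) (R : lalgType F) (s d : R -> R).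
Hypothesis Hd : sigma_derivation s d.

Lemma sderD a b : d (a + b) = d a + d b.
Proof. by case: Hd => HL _; have := HL 1 a b; rewrite !scale1r. Qed.

Lemma sder0 : d 0 = 0.
Proof. by apply: (addrI (d 0)); rewrite -sderD !addr0. Qed.

Lemma sderZ k a : d (k *: a) = k *: d a.
Proof. by case: Hd => HL _; have := HL k a 0; rewrite !addr0 sder0 addr0. Qed.

Lemma sderB a b : d (a - b) = d a - d b.
Proof.
have dN c : d (- c) = - d c by apply: (addrI (d c)); rewrite -sderD !subrr sder0.
by rewrite sderD dN.
Qed.

Lemma sderM a b : d (a * b) = d a * b + s a * d b.
Proof. by case: Hd. Qed.

Lemma sder1 : s 1 = 1 -> d 1 = 0.
Proof.
move=> s1; have := sderM 1 1; rewrite !mulr1 s1 mul1r => h.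
by apply: (addrI (d 1)); rewrite addr0 -h.
Qed.

Variable chi : R -> F^o.
Hypothesis Hchi : alg_hom chi.

Lemma sder_char0 : s 1 = 1 ->
  (forall r, chi r = 0 -> chi (d r) = 0) -> forall r, chi (d r) = 0.
Proof.
move=> s1 Hker r; have -> : r = chi r *: 1 + (r - chi r *: 1) by rewrite addrC subrK.
rewrite sderD sderZ sder1 // scaler0 add0r.
exact/Hker/char_sub_scalar.
Qed.

Lemma sder_char_cross :
  (forall a b, chi (d (a * b - b * a)) = 0) ->
  forall a b, chi (d a) * (chi b - chi (s b)) = chi (d b) * (chi a - chi (s a)).
Proof.
move=> Hcomm a b; apply/eqP; rewrite -subr_eq0; apply/eqP; rewrite -(Hcomm a b).
rewrite sderB !sderM (alg_homB Hchi) !(alg_homD Hchi) !(alg_homM Hchi); ring.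
Qed.

Lemma sder_char_inner b0 :
  (forall a b, chi (d (a * b - b * a)) = 0) -> chi b0 != chi (s b0) ->
  exists lam : F, forall r, chi (d r) = lam * (chi r - chi (s r)).
Proof.
move=> Hcomm hb0; exists (chi (d b0) / (chi b0 - chi (s b0))) => r.
by rewrite mulrAC -sder_char_cross // mulfK // subr_eq0.
Qed.

End SigmaDerivation.

Section OreExtension.
Variables (F : fieldType) (R T : lalgType F) (s d : R -> R) (iota : R -> T) (x : T).
Hypotheses (Hiota : alg_hom iota)
  (Hrel : forall r, x * iota r - iota (s r) * x = iota (d r))
  (Hspan : forall t, exists c : seq R, t = ore_sum iota x c)
  (Hind : forall c : seq R, ore_sum iota x c = 0 -> forall i, c`_i = 0).

Lemma ore_mulX r : x * iota r = iota (s r) * x + iota (d r).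
Proof. by rewrite -Hrel addrC subrK. Qed.

Lemma ore_sum_inj c c' : ore_sum iota x c = ore_sum iota x c' -> forall i, c`_i = c'`_i.
Proof.
move=> E i; set N := maxn (size c) (size c').
have /Hind/(_ i) : ore_sum iota x (mkseq (fun i => c`_i - c'`_i) N) = 0.
  by rewrite -ore_sumB // E subrr.
case: (ltnP i N) => hi; first by rewrite nth_mkseq // => /subr0_eq.
by move=> _; rewrite !nth_default // (leq_trans _ hi) // (leq_maxl, leq_maxr).
Qed.

Lemma alg_hom_ore_eq (B : lalgType F) (f g : T -> B) :
  alg_hom f -> alg_hom g -> (forall r, f (iota r) = g (iota r)) -> f x = g x ->
  forall t, f t = g t.
Proof.
move=> Hf Hg Er Ex t; have [c ->] := Hspan t.
rewrite !alg_hom_ore_sum // Ex /ore_sum; by apply: eq_bigr => i _; rewrite Er.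
Qed.

Lemma char_ore_rel (Ps : T -> F^o) : alg_hom Ps ->
  forall r, Ps (iota (d r)) = Ps x * (Ps (iota r) - Ps (iota (s r))).
Proof.
by move=> HPs r; rewrite -Hrel (alg_homB HPs) !(alg_homM HPs) mulrBr [_ * Ps x]mulrC.
Qed.

Definition ore_coefs (t : T) : seq R :=
  epsilon (inhabits [::]) (fun c => t = ore_sum iota x c).

Lemma ore_coefsP t : t = ore_sum iota x (ore_coefs t).
Proof. exact: epsilon_spec (Hspan t). Qed.

Section Lift.
Variables (B : lalgType F) (psi : R -> B) (y : B).
Hypotheses (Hpsi : alg_hom psi) (Hy : forall r, y * psi r = psi (s r) * y + psi (d r)).

Definition ore_lift (t : T) : B := ore_sum psi y (ore_coefs t).

Lemma ore_lift_ore_sum c : ore_lift (ore_sum iota x c) = ore_sum psi y c.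
Proof.
rewrite /ore_lift; set c' := ore_coefs _.
have E := ore_sum_inj (esym (ore_coefsP (ore_sum iota x c))).
rewrite (ore_sum_widen y Hpsi (leq_maxl (size c') (size c))).
rewrite (ore_sum_widen y Hpsi (leq_maxr (size c') (size c))).
by apply: eq_bigr => i _; rewrite E.
Qed.

Lemma ore_liftD t u : ore_lift (t + u) = ore_lift t + ore_lift u.
Proof.
have [a ->] := Hspan t; have [b ->] := Hspan u.
by rewrite ore_sumD // !ore_lift_ore_sum ore_sumD.
Qed.

Lemma ore_lift_iota r : ore_lift (iota r) = psi r.
Proof. by rewrite -(ore_sum_seq1 iota x) ore_lift_ore_sum ore_sum_seq1. Qed.

Lemma ore_lift_x : ore_lift x = y.
Proof. by rewrite -{1}(ore_sum_X x Hiota) ore_lift_ore_sum ore_sum_X. Qed.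

Lemma ore_lift_mull r u : ore_lift (iota r * u) = psi r * ore_lift u.
Proof.
have [c ->] := Hspan u.
by rewrite ore_sum_mull // !ore_lift_ore_sum ore_sum_mull.
Qed.

Lemma ore_lift_mulX u : ore_lift (x * u) = y * ore_lift u.
Proof.
have [c ->] := Hspan u.
by rewrite (ore_sum_mulX Hiota _ ore_mulX) ore_liftD !ore_lift_ore_sum (ore_sum_mulX Hpsi _ Hy).
Qed.

(* The t with ore_lift (t u) = ore_lift t * ore_lift u for all u contain the
   generators and are closed under sums and products. *)
Lemma ore_liftM t u : ore_lift (t * u) = ore_lift t * ore_lift u.
Proof.
pose good t := forall u, ore_lift (t * u) = ore_lift t * ore_lift u.
have ore_lift1 : ore_lift 1 = 1 by rewrite -(alg_hom1 Hiota) ore_lift_iota alg_hom1.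
have goodM a b : good b -> good a -> good (a * b).
  by move=> gb ga v; rewrite -mulrA ga gb ga mulrA.
have goodx : good x.
  by move=> v; rewrite ore_lift_mulX -[x]mulr1 ore_lift_mulX ore_lift1 mulr1.
have goodX n : good (x ^+ n).
  elim: n => [|n IH]; first by move=> v; rewrite expr0 mul1r ore_lift1 mul1r.
  by rewrite exprS; apply: goodM.
suff Ht : good t by exact: Ht.
have [c ->] := Hspan t; rewrite /ore_sum; apply: (big_ind good).
- by move=> v; rewrite mul0r -(alg_hom0 Hiota) ore_lift_iota alg_hom0 // mul0r.
- by move=> a b ga gb v; rewrite mulrDl !ore_liftD ga gb mulrDl.
- move=> i _; apply: goodM (goodX i) _ => v.
  by rewrite ore_lift_mull -[iota _]mulr1 ore_lift_mull ore_lift1 mulr1.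
Qed.

Lemma ore_lift_alg_hom : alg_hom ore_lift.
Proof.
split; [exact: ore_liftD|split; [|split; [exact: ore_liftM|]]].
  move=> k a; have -> : k *: a = iota (k *: 1) * a.
    by rewrite (alg_hom_scale1 Hiota) -scalerAl mul1r.
  by rewrite ore_lift_mull (alg_hom_scale1 Hpsi) -scalerAl mul1r.
by rewrite -(alg_hom1 Hiota) ore_lift_iota alg_hom1.
Qed.

End Lift.

Lemma Psi_char_restrict (M : T -> Prop) (Ps : T -> F^o) (m : R -> Prop) (chi : R -> F^o) :
  alg_hom Ps -> set_eq M (fun t => Ps t = 0) -> set_eq (Psi iota M) m ->
  alg_hom chi -> set_eq m (fun r => chi r = 0) ->
  forall r, Ps (iota r) = chi r.
Proof.
move=> HPs HM HPsi Hchi Hm; apply: char_eq_ker (alg_hom_comp Hiota HPs) Hchi _.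
by move=> r; rewrite -HM -Hm; exact: HPsi.
Qed.

Lemma Xi_Psi_cond_a (M : T -> Prop) : alg_hom s -> Xi M -> cond_a d (Psi iota M).
Proof.
move=> Hs [Ps [HPs HM]] a b; apply/HM.
have comm0 u v : Ps (iota (u * v - v * u)) = 0.
  exact: char_commutator (alg_hom_comp Hiota HPs).
by rewrite char_ore_rel // (alg_homB Hs) !(alg_homM Hs) !comm0 subrr mulr0.
Qed.

Lemma Xi_Psi_cond_bc (M : T -> Prop) :
  alg_aut s -> Xi M -> cond_b s d (Psi iota M) \/ cond_c s (Psi iota M).
Proof.
move=> Hs [Ps [HPs HM]].
have Hm : set_eq (Psi iota M) (fun r => Ps (iota r) = 0) by move=> r; exact: HM.
have [E|] := classic (set_eq (img s (Psi iota M)) (Psi iota M)); last by right.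
left; split=> // r /Hm Hr; apply/Hm.
have Es := (img_ker_aut Hs (alg_hom_comp Hiota HPs) Hm).1 E.
by rewrite char_ore_rel // Es subrr mulr0.
Qed.

Section FixedCharacter.
Variables (chi : R -> F^o) (m : R -> Prop).
Hypotheses (Hchi : alg_hom chi) (Hm : set_eq m (fun r => chi r = 0))
  (chi_s : forall r, chi (s r) = chi r) (chi_d : forall r, chi (d r) = 0).

Let Hpsi : alg_hom (fun r => (chi r : F)%:P) := alg_hom_comp Hchi (polyC_alg_hom F).

Lemma polyX_ore_rel r :
  'X * (chi r : F)%:P = (chi (s r) : F)%:P * 'X + (chi (d r) : F)%:P.
Proof. by rewrite chi_s chi_d addr0 mulrC. Qed.

Definition poly_lift : T -> {poly F} := ore_lift (fun r => (chi r : F)%:P) 'X.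

Lemma poly_lift_alg_hom : alg_hom poly_lift.
Proof. exact: ore_lift_alg_hom Hpsi polyX_ore_rel. Qed.

Lemma poly_lift_ore_sum c : poly_lift (ore_sum iota x c) = \poly_(i < size c) (chi c`_i : F).
Proof.
rewrite /poly_lift ore_lift_ore_sum // poly_def /ore_sum.
by apply: eq_bigr => i _; rewrite mul_polyC.
Qed.

Lemma poly_lift_surj p : exists t, poly_lift t = p.
Proof.
exists (ore_sum iota x (map (fun k => k *: (1 : R)) p)).
rewrite poly_lift_ore_sum size_map -[RHS]coefK; apply: eq_poly => i hi.
by rewrite (nth_map 0) // (alg_hom_scale1 Hchi) regular_scale1.
Qed.

Lemma ext_right_ker : set_eq (ext_right iota m) (fun t => poly_lift t = 0).
Proof.
have Hlift := poly_lift_alg_hom; move=> t; split.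
  move=> [n [a [b [Ha ->]]]]; rewrite (alg_hom_sum Hlift) big1 // => i _.
  rewrite (alg_homM Hlift) /poly_lift ore_lift_iota //.
  by have /Hm -> := Ha i; rewrite polyC0 mul0r.
have [c ->] := Hspan t; rewrite poly_lift_ore_sum => H0.
exists (size c), (fun i : 'I_(size c) => c`_i), (fun i : 'I_(size c) => x ^+ i).
split=> // i; apply/Hm.
by have := congr1 (fun p : {poly F} => p`_i) H0; rewrite coef_poly ltn_ord coef0.
Qed.

Lemma poly_lift_x_sub (lam : F) : poly_lift (x - lam%:A) = 'X - lam%:P.
Proof.
have Hlift := poly_lift_alg_hom.
by rewrite (alg_homB Hlift) (alg_hom_scale1 Hlift) /poly_lift ore_lift_x // alg_polyC.
Qed.

Lemma fiber_ideal_ker (lam : F) :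
  set_eq (fiber_ideal iota x m lam) (fun t => (poly_lift t).[lam] = 0).
Proof.
have Hev := alg_hom_comp poly_lift_alg_hom (horner_alg_hom lam).
move=> t; split.
  move=> /(_ _ (ker_is_ideal Hev)); apply=> u [/ext_right_ker -> | ->].
    exact: horner0.
  by rewrite poly_lift_x_sub hornerD hornerN hornerX hornerC subrr.
move=> /eqP /factor_theorem [q Hq] I [_ [I_add [I_mull _]]] I_gen.
have [u Hu] := poly_lift_surj q.
rewrite -(subrK (u * (x - lam%:A)) t); apply: I_add; last by apply/I_mull/I_gen; right.
apply/I_gen; left; apply/ext_right_ker.
have Hlift := poly_lift_alg_hom.
by rewrite (alg_homB Hlift) (alg_homM Hlift) Hu poly_lift_x_sub Hq subrr.
Qed.

Lemma Xi_fiber_iff (M : T -> Prop) :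
  (Xi M /\ set_eq (Psi iota M) m) <-> exists lam : F, set_eq M (fiber_ideal iota x m lam).
Proof.
have Hlift := poly_lift_alg_hom.
have lift_iota r : poly_lift (iota r) = (chi r : F)%:P by rewrite /poly_lift ore_lift_iota.
split.
  move=> [[Ps [HPs HM]] HPsi]; exists (Ps x) => t; rewrite HM fiber_ideal_ker.
  have Hev := alg_hom_comp Hlift (horner_alg_hom (Ps x)).
  suff -> : Ps t = (poly_lift t).[Ps x] by [].
  apply: (alg_hom_ore_eq HPs Hev).
    by move=> r; rewrite (Psi_char_restrict HPs HM HPsi Hchi Hm) lift_iota hornerC.
  by rewrite /poly_lift ore_lift_x // hornerX.
move=> [lam E]; split.
  by exists (fun t => (poly_lift t).[lam] : F^o); split;
    [exact: alg_hom_comp Hlift (horner_alg_hom lam) | move=> t; rewrite E fiber_ideal_ker].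
by move=> r; rewrite /Psi E fiber_ideal_ker lift_iota hornerC -Hm.
Qed.

Lemma fiber_ideal_inj (lam mu : F) :
  set_eq (fiber_ideal iota x m lam) (fiber_ideal iota x m mu) -> lam = mu.
Proof.
move=> E; have /E/fiber_ideal_ker : fiber_ideal iota x m lam (x - lam%:A).
  by apply/fiber_ideal_ker; rewrite poly_lift_x_sub hornerD hornerN hornerX hornerC subrr.
by rewrite poly_lift_x_sub hornerD hornerN hornerX hornerC => /subr0_eq.
Qed.

End FixedCharacter.

Lemma Xi_over_unique (chi : R -> F^o) (m : R -> Prop) (lam : F) (b0 : R) :
  alg_hom chi -> set_eq m (fun r => chi r = 0) ->
  (forall r, chi (d r) = lam * (chi r - chi (s r))) -> chi b0 != chi (s b0) ->
  exists M : T -> Prop, (Xi M /\ set_eq (Psi iota M) m) /\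
    forall M' : T -> Prop, Xi M' -> set_eq (Psi iota M') m -> set_eq M' M.
Proof.
move=> Hchi Hm Hinner hb0.
have Hy r : lam * chi r = chi (s r) * lam + chi (d r) by rewrite Hinner; ring.
have Hlift := ore_lift_alg_hom Hchi Hy.
exists (fun t => ore_lift chi lam t = 0); split.
  split; first by exists (ore_lift chi lam).
  by move=> r; rewrite /Psi ore_lift_iota //; split=> /Hm.
move=> M' [Ps [HPs HM']] HPsi t; rewrite HM'.
have Ech := Psi_char_restrict HPs HM' HPsi Hchi Hm.
have Ex : Ps x = lam.
  have hD : chi b0 - chi (s b0) != 0 by rewrite subr_eq0.
  by have := char_ore_rel HPs b0; rewrite !Ech Hinner => /(mulIf hD) ->.
suff -> : Ps t = ore_lift chi lam t by [].
apply: (alg_hom_ore_eq HPs Hlift) => [r|]; first by rewrite Ech ore_lift_iota.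
by rewrite Ex ore_lift_x.
Qed.

Lemma Xi_over_cond_b (m : R -> Prop) :
  alg_aut s -> sigma_derivation s d -> Xi m -> cond_b s d m ->
  cond_a d m /\
  is_ideal (ext_right iota m) /\
  (exists phi : T -> {poly F}, alg_hom phi /\
     (forall p, exists t, phi t = p) /\
     set_eq (ext_right iota m) (fun t => phi t = 0)) /\
  (forall M : T -> Prop,
     (Xi M /\ set_eq (Psi iota M) m) <->
     (exists lam : F, set_eq M (fiber_ideal iota x m lam))) /\
  (forall lam mu : F,
     set_eq (fiber_ideal iota x m lam) (fiber_ideal iota x m mu) -> lam = mu).
Proof.
move=> Hs Hd [chi [Hchi Hm]] [Hsm Hdm].
have chi_s := (img_ker_aut Hs Hchi Hm).1 Hsm.
have chi_d : forall r, chi (d r) = 0.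
  by apply: (sder_char0 Hd Hchi (alg_hom1 Hs.1)) => r /Hm /Hdm /Hm.
have Hlift := poly_lift_alg_hom Hchi chi_s chi_d.
split; first by move=> a b; apply/Hm/chi_d.
split; first exact: is_ideal_eq (ext_right_ker Hchi Hm chi_s chi_d) (ker_is_ideal Hlift).
split; first by exists (poly_lift chi); split; [|split];
  [|exact: poly_lift_surj|exact: ext_right_ker].
split; first exact: Xi_fiber_iff Hchi Hm chi_s chi_d.
exact: fiber_ideal_inj Hchi Hm chi_s chi_d.
Qed.

Lemma Xi_over_cond_ac (m : R -> Prop) :
  alg_aut s -> sigma_derivation s d -> Xi m -> cond_a d m -> cond_c s m ->
  exists M : T -> Prop, (Xi M /\ set_eq (Psi iota M) m) /\
    forall M' : T -> Prop, Xi M' -> set_eq (Psi iota M') m -> set_eq M' M.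
Proof.
move=> Hs Hd [chi [Hchi Hm]] Ha Hc.
have [b0 hb0] : exists b0, chi b0 != chi (s b0).
  apply: NNPP => Hn; apply/Hc/(img_ker_aut Hs Hchi Hm) => r.
  by case: (eqVneq (chi r) (chi (s r))) => // H; case: Hn; exists r.
have [lam Hinner] := sder_char_inner Hd Hchi (fun a b => proj1 (Hm _) (Ha a b)) hb0.
exact: Xi_over_unique Hchi Hm Hinner hb0.
Qed.

End OreExtension.

Theorem theorem4p2 (F : closedFieldType) (R T : algType F)
  (s d : R -> R) (iota : R -> T) (x : T) :
  alg_aut s -> sigma_derivation s d -> is_ore_ext s d iota x ->
  (* (i) *)
  (forall M : T -> Prop, Xi M ->
     cond_a d (Psi iota M) /\
     (cond_b s d (Psi iota M) \/ cond_c s (Psi iota M))) /\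
  (* (ii) *)
  (forall m : R -> Prop, Xi m -> cond_b s d m ->
     cond_a d m /\
     is_ideal (ext_right iota m) /\
     (exists phi : T -> {poly F}, alg_hom phi /\
        (forall p, exists t, phi t = p) /\
        set_eq (ext_right iota m) (fun t => phi t = 0)) /\
     (forall M : T -> Prop,
        (Xi M /\ set_eq (Psi iota M) m) <->
        (exists lam : F, set_eq M (fiber_ideal iota x m lam))) /\
     (forall lam mu : F,
        set_eq (fiber_ideal iota x m lam) (fiber_ideal iota x m mu) -> lam = mu)) /\
  (* (iii) *)
  (forall m : R -> Prop, Xi m -> cond_a d m -> cond_c s m ->
     exists M : T -> Prop, (Xi M /\ set_eq (Psi iota M) m) /\
       forall M' : T -> Prop, Xi M' -> set_eq (Psi iota M') m -> set_eq M' M).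
Proof.
move=> Hs Hd [Hiota [Hrel [Hspan Hind]]].
split.
  move=> M HM; split; first exact: Xi_Psi_cond_a Hiota Hrel M Hs.1 HM.
  exact: Xi_Psi_cond_bc Hiota Hrel M Hs HM.
split=> m Hm.
  exact: Xi_over_cond_b Hiota Hrel Hspan Hind m Hs Hd Hm.
exact: Xi_over_cond_ac Hiota Hrel Hspan Hind m Hs Hd Hm.
Qed.
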